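(* Let $G$ be a connected chordal graph with at least two vertices. A vertex $v\in V(G)$ is an $\mathcal{L}$-branch leaf of some perfect elimination ordering of $G$ if and only if $v$ is simplicial in $G$.
   Context: Graphs are finite, simple, undirected. A graph is chordal if it has no induced cycle of length at least 4. A vertex is simplicial if its neighborhood is a clique. A vertex ordering $\sigma$ of $G$ (a bijection $\{1,\dots,n\}\to V(G)$, with $u\prec_\sigma w$ meaning $u$ comes before $w$) is a perfect elimination ordering (PEO) if every vertex $v$ is simplicial in the subgraph induced by $\{w : w\prec_\sigma v\}\cup\{v\}$, i.e., the neighbors of $v$ to its left form a clique. For an ordering $\sigma$ of a connected graph in which every vertex other than $\sigma(1)$ has a neighbor to its left (as is the case for PEOs of connected chordal graphs), the $\mathcal{L}$-tree of $\sigma$ is the spanning tree containing, for each $v\neq\sigma(1)$, the edge from $v$ to its rightmost neighbor $w$ with $w\prec_\sigma v$. A vertex $v\neq\sigma(1)$ that is a leaf of the $\mathcal{L}$-tree is an $\mathcal{L}$-branch leaf of $\sigma$. *)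

From mathcomp Require Import all_boot.
Set Implicit Arguments. Unset Strict Implicit. Unset Printing Implicit Defensive.

Definition simple_graph (T : finType) (e : rel T) : Prop :=
  symmetric e /\ irreflexive e.

Definition connected_graph (T : finType) (e : rel T) : Prop :=
  forall x y : T, connect e x y.

Definition induced_cycle (T : finType) (e : rel T) (c : seq T) : Prop :=
  [/\ uniq c, 4 <= size c &
    forall (x0 : T) i j, i < size c -> j < size c ->
      e (nth x0 c i) (nth x0 c j) =
      (j == i.+1 %% size c) || (i == j.+1 %% size c)].

Definition chordal (T : finType) (e : rel T) : Prop :=
  forall c : seq T, ~ induced_cycle e c.

Definition simplicial (T : finType) (e : rel T) (v : T) : Prop :=
  forall x y : T, e v x -> e v y -> x != y -> e x y.

(* A vertex ordering: a sequence listing every vertex exactly once;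
   sigma(1) is the head, u precedes w iff its index is smaller. *)
Definition vertex_ordering (T : finType) (s : seq T) : Prop :=
  perm_eq s (enum T).

Definition prec (T : finType) (s : seq T) (u w : T) : bool :=
  index u s < index w s.

Definition peo (T : finType) (e : rel T) (s : seq T) : Prop :=
  vertex_ordering s /\
  forall v x y : T, prec s x v -> prec s y v -> e v x -> e v y -> x != y ->
    e x y.

Definition rightmost_left_nbr (T : finType) (e : rel T) (s : seq T) (v w : T)
  : bool :=
  [&& prec s w v, e v w &
      [forall u : T, (prec s w u && prec s u v) ==> ~~ e v u]].

Definition Ltree_edge (T : finType) (e : rel T) (s : seq T) (x y : T) : bool :=
  (rightmost_left_nbr e s x y || rightmost_left_nbr e s y x).

Definition Ltree_degree (T : finType) (e : rel T) (s : seq T) (v : T) : nat :=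
  #|[set w : T | Ltree_edge e s v w]|.

Definition Lbranch_leaf (T : finType) (e : rel T) (s : seq T) (v : T) : Prop :=
  v != head v s /\ Ltree_degree e s v = 1.

From mathcomp Require Import all_boot zify.
Set Implicit Arguments. Unset Strict Implicit. Unset Printing Implicit Defensive.

(* An L-branch leaf v is not the first vertex of the PEO, so it has a left
   neighbour: otherwise a chordless walk from v to the first vertex would start
   to the right of v and, by the PEO property, keep moving right.  Hence v has
   an L-tree edge to its rightmost left neighbour.  A right neighbour of v would
   give a second one, since v is the rightmost left neighbour of its leftmost
   right neighbour.  So all neighbours of v precede it and form a clique.
   Conversely, G - v is chordal, so by Dirac's lemma it has a PEO; appending a
   simplicial v keeps it a PEO, in which the only L-tree edge at v goes to its
   rightmost left neighbour. *)

Section ChordlessWalks.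
Variables (T : eqType) (e : rel T).

Definition walk (P : pred T) (a b : T) (q : seq T) :=
  [/\ 0 < size q, nth a q 0 = a, nth a q (size q).-1 = b, all P q &
      forall k, k.+1 < size q -> e (nth a q k) (nth a q k.+1)].

Definition chordless (a : T) (q : seq T) :=
  forall i j, i.+1 < j -> j < size q -> ~~ e (nth a q i) (nth a q j).

Lemma path_walk P a p :
  path e a p -> all P (a :: p) -> walk P a (last a p) (a :: p).
Proof. by move=> /(pathP a) ap aP; split; rewrite ?nth_last. Qed.

Lemma walk_drop P a b q j : walk P a b q -> j < size q -> nth a q j = a ->
  walk P a b (drop j q).
Proof.
move=> [_ _ qb qP qe] jq qja; rewrite /walk size_drop !nth_drop addn0; split => //.
- lia.
- by rewrite -qb; congr nth; lia.
- by apply/allP => x /mem_drop /(allP qP).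
- by move=> k kq; rewrite !nth_drop addnS; apply: qe; lia.
Qed.

Lemma walk_splice P a b q i j : walk P a b q -> 0 < i <= j -> j < size q ->
  e (nth a q i.-1) (nth a q j) -> walk P a b (take i q ++ drop j q).
Proof.
move=> [q0 qa qb qP qe] /andP[i0 ij] jq eij.
have szt : size (take i q) = i by rewrite size_take; case: ifP => //; lia.
have nthE k : nth a (take i q ++ drop j q) k =
    if k < i then nth a q k else nth a q (j + (k - i)).
  by rewrite nth_cat szt; case: ifP => ki; rewrite ?nth_take ?nth_drop.
rewrite /walk size_cat szt size_drop !nthE i0; split => //.
- lia.
- by case: ifP => [|_]; [lia | rewrite -qb; congr nth; lia].
- by apply/allP => x /[!mem_cat] /orP[/mem_take|/mem_drop] /(allP qP).
move=> k kq; rewrite !nthE; case: (ltnP k.+1 i) => ki.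
  by rewrite (ltnW ki); apply: qe; lia.
case: (ltnP k i) => [ki'|ik].
  have -> : k = i.-1 by lia.
  by rewrite prednK // subnn addn0.
have -> : j + (k.+1 - i) = (j + (k - i)).+1 by lia.
apply: qe; lia.
Qed.

Lemma walk_chordless P a b q : walk P a b q ->
  exists q', [/\ walk P a b q', uniq q' & chordless a q'].
Proof.
have [n] := ubnP (size q); elim: n q => // n IH q /ltnSE qn qw.
have [_ qa _ _ qe] := qw.
case/boolP: (uniq q) => [q_uniq | /(uniqPn a)[[|i] [j [ij jq qij]]]].
- case/boolP: [exists i : 'I_(size q), exists j : 'I_(size q),
                 (i.+1 < j) && e (nth a q i) (nth a q j)].
    case/existsP=> i /existsP[j /andP[ij eij]].
    have := ltn_ord j; have := ltn_ord i => iq jq.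
    apply: (IH (take i.+1 q ++ drop j q)).
      by rewrite size_cat size_takel ?size_drop; lia.
    by apply: walk_splice => //; lia.
  move/existsPn=> nochord; exists q; split=> // i j ij jq.
  have iq : i < size q by lia.
  by move: (nochord (Ordinal iq)) => /existsPn/(_ (Ordinal jq)); rewrite /= ij.
- apply: (IH (drop j q)); first by rewrite size_drop; lia.
  by apply: walk_drop; rewrite // -qij.
- apply: (IH (take i.+1 q ++ drop j q)).
    by rewrite size_cat size_takel ?size_drop; lia.
  by apply: walk_splice => //=; [lia | rewrite -qij; apply: qe; lia].
Qed.

Lemma chordless_adjE a q i j : irreflexive e -> symmetric e -> chordless a q ->
  (forall k, k.+1 < size q -> e (nth a q k) (nth a q k.+1)) ->
  i < size q -> j < size q ->
  e (nth a q i) (nth a q j) = (j == i.+1) || (i == j.+1).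
Proof.
move=> eirr esym cl qe iq jq; case: (ltngtP i j) => [ij|ji|->].
- case: (eqVneq j i.+1) (jq) => [-> ?|ne _]; first by rewrite qe.
  by rewrite (negbTE (cl i j _ _)) //; lia.
- case: (eqVneq i j.+1) (iq) => [-> ?|ne _]; first by rewrite esym qe ?orbT.
  by rewrite esym (negbTE (cl j i _ _)) //; lia.
- by rewrite eirr; lia.
Qed.

End ChordlessWalks.

Lemma eq_modS i j n : i <= n ->
  (j == i.+1 %% n.+1) = (i < n) && (j == i.+1) || (i == n) && (j == 0).
Proof.
move=> le_in; case: (eqVneq i n) => [->|ne]; first by rewrite modnn; lia.
by rewrite modn_small; lia.
Qed.

Section ChordalGraphs.
Variables (T : finType) (e : rel T).
Hypotheses (esym : symmetric e) (eirr : irreflexive e) (ech : chordal e).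

Lemma cons_induced_cycle (u a : T) (q : seq T) :
  uniq q -> 3 <= size q -> chordless e a q ->
  (forall k, k.+1 < size q -> e (nth a q k) (nth a q k.+1)) -> u \notin q ->
  (forall k, k < size q -> e u (nth a q k) = (k == 0) || (k == (size q).-1)) ->
  induced_cycle e (u :: q).
Proof.
move=> q_uniq q3 cl qe uq uE; split => /=; [by rewrite uq | lia |].
move=> x0 [|i] [|j] /= iq jq; rewrite !eq_modS //.
- by rewrite eirr; lia.
- by rewrite (set_nth_default a) ?uE; lia.
- by rewrite esym (set_nth_default a) ?uE; lia.
- by rewrite !(set_nth_default a x0) ?chordless_adjE //; lia.
Qed.

Definition clique (K : {set T}) := {in K &, forall x y, x != y -> e x y}.

Definition simplicial_in (H : {set T}) (x : T) :=
  {in H &, forall y z, e x y -> e x z -> y != z -> e y z}.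

Lemma chordal_nbrs_linked_adj (C : {set T}) (u s t c : T) (p : seq T) :
  u \notin C -> {in C, forall w, ~~ e u w} -> path e c p -> all (mem C) (c :: p) ->
  e u s -> e u t -> e s c -> e t (last c p) -> s != t -> e s t.
Proof.
move=> uC nuC cp cpC us ut sc tc st; apply/negPn/negP => nst.
pose P := [pred w | (w \in C) || (w == s) || (w == t)].
have stP : walk e P s t (s :: c :: rcons p t).
  have := @path_walk _ e P s (c :: rcons p t); rewrite [last _ _]/= last_rcons; apply.
    by rewrite /= sc rcons_path cp /= esym tc.
  apply/allP => w; rewrite !(inE, mem_rcons) => /or4P[/eqP->|wc|/eqP->|wp];
    rewrite /= ?eqxx ?orbT //; have -> // : w \in C;
    by apply: (allP cpC); rewrite inE ?wc ?wp ?orbT.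
have [q [[q0 qs qt qP qe] q_uniq q_cl]] := walk_chordless stP.
have q3 : 2 < size q.
  case: q q0 qs qt qe {q_uniq q_cl qP} => [|x [|y [|z q]]] //= _ xs yt.
    by move: st; rewrite -xs yt eqxx.
  by move=> /(_ 0 isT); rewrite xs yt (negbTE nst).
have uP : ~~ P u.
  have [us' ut'] : u != s /\ u != t.
    by split; [move: us | move: ut]; apply: contraTneq => <-; rewrite eirr.
  by rewrite /= (negbTE uC) (negbTE us') (negbTE ut').
(* u closes the chordless s-t walk through C into an induced cycle. *)
apply: (ech (c := u :: q)); apply: (cons_induced_cycle (a := s)) => //.
  by apply: contra uP => /(allP qP).
move=> k kq; case: (eqVneq k 0) => [->|k0]; first by rewrite qs us.
case: (eqVneq k (size q).-1) => [->|kl]; first by rewrite qt ut orbT.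
have qk_s : nth s q k != s by rewrite -{2}qs nth_uniq.
have qk_t : nth s q k != t by rewrite -qt nth_uniq //; lia.
have /= := allP qP _ (mem_nth s kq).
by rewrite (negbTE qk_s) (negbTE qk_t) !orbF => /nuC /negbTE ->.
Qed.

Lemma clique_vertex_with_nonnbr (H K : {set T}) (y0 z0 : T) :
  K \subset H -> clique K -> y0 \in H -> z0 \in H -> y0 != z0 -> ~~ e y0 z0 ->
  exists u, [/\ u \in H, {in K :\ u, forall k, e u k} &
                exists2 y, y \in H & (y != u) && ~~ e u y].
Proof.
move=> KH cK y0H z0H y0z0 ny0z0.
case: (boolP [exists k in K, exists w in H, (w != k) && ~~ e k w]).
  case/exists_inP=> k kK /exists_inP[w wH wk]; exists k; split; last by exists w.
  - exact: (subsetP KH).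
  - by move=> k' /setD1P[k'k k'K]; apply: cK; rewrite // eq_sym.
move/exists_inPn=> Kdom; exists y0; split=> //; first last.
  by exists z0; rewrite // eq_sym y0z0.
move=> k /setD1P[ky0 kK]; move/exists_inPn/(_ y0 y0H): (Kdom k kK).
by rewrite eq_sym ky0 esym => /negbNE.
Qed.

Definition restr (D : {set T}) := [rel a b | [&& a \in D, b \in D & e a b]].

Definition component (D : {set T}) (y : T) := [set w | connect (restr D) y w].

Lemma component_sub (D : {set T}) (y : T) :
  y \in D -> {subset component D y <= D}.
Proof.
move=> yD w; rewrite inE => /connectP[p].
elim: p y yD => [|z p IHp] y yD /=; first by move=> _ ->.
by case/andP=> /and3P[_ zD _]; apply: IHp.
Qed.

Lemma component_nbrs_clique (H D : {set T}) (u y : T) :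
  y \in D -> u \notin D -> {in D, forall w, ~~ e u w} ->
  clique [set w in H | e u w && [exists c in component D y, e w c]].
Proof.
move=> yD uD nuD s t /setIdP[_ /andP[us /exists_inP[c1 c1C sc1]]].
move=> /setIdP[_ /andP[ut /exists_inP[c2 c2C tc2]]] st.
have CD := component_sub yD.
have /connectP[p c1p c2E] : connect (restr D) c1 c2.
  have rsym : connect_sym (restr D).
    by apply: sym_connect_sym => a b /=; rewrite esym andbCA.
  move: c1C c2C; rewrite !inE => c1C c2C.
  by apply: (@connect_trans _ _ y); rewrite // rsym.
apply: (@chordal_nbrs_linked_adj (component D y) u s t c1 p) => //.
- by apply: contra uD => /CD.
- by move=> w /CD /nuD.
- by apply: sub_path c1p => a b /and3P[].
- apply/allP => w /(path_connect c1p) c1w; rewrite !inE.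
  by apply: connect_trans c1w; rewrite inE in c1C.
- by rewrite -c2E.
Qed.

Lemma chordal_simplicial_outside_clique (H K : {set T}) :
  K \subset H -> clique K -> ~~ (H \subset K) ->
  exists2 x, x \in H :\: K & simplicial_in H x.
Proof.
have [n] := ubnP #|H|; elim: n H K => // n IH H K /ltnSE Hn KH cK /subsetPn[x0 x0H x0K].
case: (boolP [forall y in H, forall z in H, (y != z) ==> e y z]) => [Hcl|].
  exists x0 => [|y z yH zH _ _]; first by rewrite inE x0K.
  exact/implyP/(forall_inP (forall_inP Hcl y yH) z zH).
case/forall_inPn=> y0 y0H /forall_inPn[z0 z0H]; rewrite negb_imply => /andP[y0z0 ny0z0].
have [u [uH uK [y yH /andP[yu nuy]]]] :=
  clique_vertex_with_nonnbr KH cK y0H z0H y0z0 ny0z0.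
(* Dirac's argument: induction on C :|: N with K := N; a vertex of C has all
   its neighbours in C :|: N and, not being adjacent to u, lies outside K. *)
set D := [set w in H | (w != u) && ~~ e u w].
set C := component D y.
set N := [set w in H | e u w && [exists c in C, e w c]].
have yD : y \in D by rewrite inE yH yu.
have uD : u \notin D by rewrite inE eqxx andbF.
have nuD : {in D, forall w, ~~ e u w} by move=> w /setIdP[_ /andP[]].
have CD : {subset C <= D} := component_sub yD.
have CN_lt : #|C :|: N| < n.
  apply: leq_trans Hn; apply/proper_card/properP; split.
    by apply/subsetP => w /setUP[/CD|] /setIdP[].
  exists u; rewrite // in_setU negb_or [u \in N]inE eirr andbF andbT.
  by apply: contra uD => /CD.
have CN_N : ~~ (C :|: N \subset N).
  by apply/subsetPn; exists y; rewrite !inE ?connect0 // (negbTE nuy) andbF.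
have [x /setDP[xCN xN] x_simpl] :=
  IH (C :|: N) N CN_lt (subsetUr _ _) (component_nbrs_clique (H := H) yD uD nuD) CN_N.
have xC : x \in C by move: xCN; rewrite in_setU (negbTE xN) orbF.
have xD := CD x xC; have /setIdP[xH /andP[xu nux]] := xD.
have x_nbrs : {in H, forall w, e x w -> w \in C :|: N}.
  move=> w wH xw; apply/setUP; case: (boolP (e u w)) => uw.
    by right; rewrite inE wH uw; apply/exists_inP; exists x; rewrite // esym.
  have wD : w \in D.
    by rewrite inE wH uw andbT; apply: contraTneq xw => ->; rewrite esym (negbTE nux).
  left; rewrite inE in xC; rewrite inE; apply: connect_trans xC (connect1 _).
  by rewrite /restr /= xD wD.
exists x => [|a b aH bH xa xb]; first last.
  exact: x_simpl (x_nbrs a aH xa) (x_nbrs b bH xb) xa xb.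
rewrite inE xH andbT; apply: contra nux => xK.
by apply: uK; apply/setD1P.
Qed.

End ChordalGraphs.

Section EliminationOrderings.
Variables (T : finType) (e : rel T).

(* Restricted to v \in s: for v outside s, [prec s x v] holds for all x \in s. *)
Definition peo_seq (s : seq T) :=
  {in s, forall v x y, prec s x v -> prec s y v -> e v x -> e v y -> x != y -> e x y}.

Lemma prec_rcons (s : seq T) (z x v : T) :
  v \in s -> prec (rcons s z) x v = prec s x v.
Proof.
rewrite /prec -!cats1 !index_cat => vs; rewrite vs.
case: ifP => // /negbT xs; have := index_mem v s; rewrite vs (memNindex xs); lia.
Qed.

Lemma prec_rcons_last (s : seq T) (z x : T) :
  z \notin s -> prec (rcons s z) x z = (x \in s).
Proof.
rewrite /prec -!cats1 !index_cat /= eqxx addn0 => /negbTE ->.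
by case: ifP => xs; rewrite ?index_mem //; lia.
Qed.

Lemma peo_seq_rcons (s : seq T) (z : T) : z \notin s -> peo_seq s ->
  {in s &, forall x y, e z x -> e z y -> x != y -> e x y} -> peo_seq (rcons s z).
Proof.
move=> zs ps zsimp v; rewrite mem_rcons inE => /predU1P[-> | vs] x y.
  by rewrite !prec_rcons_last //; apply: zsimp.
by rewrite !prec_rcons //; apply: ps.
Qed.

Lemma chordal_peo_seq (A : {set T}) : symmetric e -> irreflexive e -> chordal e ->
  exists s, [/\ uniq s, s =i A & peo_seq s].
Proof.
move=> esym eirr ech; have [n] := ubnP #|A|; elim: n A => // n IH A /ltnSE An.
have [-> | [z zA]] := set_0Vmem A; first by exists [::]; split=> // x; rewrite inE.
have c0 : clique e set0 by move=> x; rewrite inE.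
have A0 : ~~ (A \subset set0) by apply/subsetPn; exists z; rewrite ?inE.
have [x /setDP[xA _] x_simpl] :=
  chordal_simplicial_outside_clique esym eirr ech (sub0set A) c0 A0.
have [|s [s_uniq sE ps]] := IH (A :\ x); first by rewrite (cardsD1 x A) xA in An.
have xs : x \notin s by rewrite sE !inE eqxx.
exists (rcons s x); split.
- by rewrite rcons_uniq xs.
- by move=> w; rewrite mem_rcons inE sE !inE; case: eqVneq => // ->.
apply: peo_seq_rcons => // a b; rewrite !sE => /setD1P[_ aA] /setD1P[_ bA].
exact: x_simpl.
Qed.
End EliminationOrderings.

Section LTree.
Variables (T : finType) (e : rel T) (s : seq T).
Hypothesis so : vertex_ordering s.

Lemma mem_ordering x : x \in s.
Proof. by rewrite (perm_mem so) mem_enum. Qed.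

Lemma prec_total x y : x != y -> prec s x y || prec s y x.
Proof.
move=> xy; rewrite /prec; case: ltngtP => // /index_inj.
by move=> /(_ x (mem_ordering x) (mem_ordering y)) eqxy; rewrite eqxy eqxx in xy.
Qed.

Lemma prec_trans : transitive (prec s).
Proof. by move=> y x z; apply: ltn_trans. Qed.

Lemma peoP : peo e s <-> peo_seq e s.
Proof.
by split=> [[_ ps] v _ | ps]; [apply: ps | split=> // v; apply/ps/mem_ordering].
Qed.

Lemma rightmost_left_nbr_uniq v w1 w2 :
  rightmost_left_nbr e s v w1 -> rightmost_left_nbr e s v w2 -> w1 = w2.
Proof.
move=> /and3P[w1v vw1 /forallP w1max] /and3P[w2v vw2 /forallP w2max].
apply/eqP/negPn/negP => /prec_total /orP[lt | lt].
- by move: (w1max w2); rewrite lt w2v vw2.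
- by move: (w2max w1); rewrite lt w1v vw1.
Qed.

Lemma exists_rightmost_left_nbr v z :
  e v z -> prec s z v -> exists w, rightmost_left_nbr e s v w.
Proof.
move=> vz zv; have Pz : e v z && prec s z v by rewrite vz zv.
case: (@arg_maxnP _ z [pred w | e v w && prec s w v] (index^~ s) Pz).
move=> w /andP[vw wv] wmax.
exists w; apply/and3P; split=> //; apply/forallP => u; apply/implyP => /andP[wu uv].
by apply: contraL wu => vu; rewrite /prec -leqNgt; apply: wmax; rewrite /= vu.
Qed.

Lemma leftmost_right_nbr v u : symmetric e -> peo_seq e s ->
  e v u -> prec s v u -> exists w, rightmost_left_nbr e s w v.
Proof.
move=> esym ps vu vpu; have Pu : e v u && prec s v u by rewrite vu vpu.
case: (@arg_minnP _ u [pred w | e v w && prec s v w] (index^~ s) Pu).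
move=> w /andP[vw vpw] wmin.
exists w; apply/and3P; split; rewrite // 1?esym //.
apply/forallP => x; apply/implyP => /andP[vx xw]; apply/negP => wx.
have vx' : e v x.
  apply: (ps w (mem_ordering w) v x) => //; first by rewrite esym.
  by apply: contraTneq vx => ->; rewrite /prec ltnn.
by move: (wmin x) xw; rewrite /= vx' vx /prec => /(_ isT); lia.
Qed.

Lemma chordless_walk_ascending P a b q : symmetric e -> peo_seq e s ->
  walk e P a b q -> uniq q -> chordless e a q -> prec s a (nth a q 1) ->
  sorted (prec s) q.
Proof.
move=> esym ps [_ qa _ _ qe] q_uniq q_cl a_q1; apply/(sortedP a).
elim=> [|k IHk] kq; first by rewrite qa.
have q_k1 := IHk (ltnW kq).
(* A left turn at q_k.+1 would make q_k, q_k.+2 adjacent: a chord. *)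
apply: contraT => q_k12.
have ne12 : nth a q k.+1 != nth a q k.+2 by rewrite nth_uniq //; lia.
have q_k21 : prec s (nth a q k.+2) (nth a q k.+1).
  by move: (prec_total ne12); rewrite (negbTE q_k12).
have ne02 : nth a q k != nth a q k.+2 by rewrite nth_uniq //; lia.
have e10 : e (nth a q k.+1) (nth a q k) by rewrite esym qe //; lia.
have := ps _ (mem_ordering _) _ _ q_k1 q_k21 e10 (qe k.+1 kq) ne02.
by rewrite (negbTE (q_cl k k.+2 _ kq)).
Qed.

Lemma peo_left_nbr x : symmetric e -> connected_graph e -> peo_seq e s ->
  x != head x s -> exists2 z, e x z & prec s z x.
Proof.
move=> esym conn ps xh; have /connectP[p xp hp] := conn x (head x s).
have [q [qw q_uniq q_cl]] := walk_chordless (path_walk xp (all_predT (x :: p))).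
rewrite -hp in qw; have [q0 qx qh _ qe] := qw.
have q1 : 1 < size q.
  move: q0 qx qh; case: q {qw q_uniq q_cl qe} => [|y [|? ?]] //= _ -> hx.
  by rewrite -hx eqxx in xh.
case: (boolP [exists z, e x z && prec s z x]) => [/existsP[z /andP[]]|/existsPn noleft].
  by exists z.
have x_q1 : prec s x (nth x q 1).
  have xq1 : e x (nth x q 1) by rewrite -{1}qx; apply: qe.
  have ne : x != nth x q 1 by rewrite -{1}qx nth_uniq.
  by move: (prec_total ne) (noleft (nth x q 1)); rewrite xq1 /= => /orP[] // ->.
have asc := chordless_walk_ascending esym ps qw q_uniq q_cl x_q1.
have : prec s (nth x q 0) (nth x q (size q).-1).
  by apply: (sorted_ltn_nth prec_trans x asc); rewrite ?inE ?ltn_predL ?ltn_predRL.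
rewrite qx qh /prec; have -> // : index (head x s) s = 0.
by case: s => [|y t] //=; rewrite eqxx.
Qed.

Lemma Lbranch_leaf_nbrs_left v u :
  symmetric e -> irreflexive e -> connected_graph e -> peo_seq e s ->
  Lbranch_leaf e s v -> e v u -> prec s u v.
Proof.
move=> esym eirr conn ps [vh deg1] vu.
have [z vz zv] := peo_left_nbr esym conn ps vh.
have [w vw] := exists_rightmost_left_nbr vz zv.
apply: contraT => nuv.
have vpu : prec s v u.
  have vu' : v != u by apply: contraTneq vu => <-; rewrite eirr.
  by move: (prec_total vu'); rewrite (negbTE nuv) orbF.
have [w' w'v] := leftmost_right_nbr esym ps vu vpu.
have ww' : w != w'.
  move: vw w'v => /and3P[wv _ _] /and3P[vw' _ _].
  by apply: contraTneq wv => ->; rewrite /prec -leqNgt ltnW.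
have : #|[set w; w']| <= Ltree_degree e s v.
  apply/subset_leq_card/subsetP => x; rewrite !inE /Ltree_edge.
  by case/orP=> /eqP->; rewrite ?vw ?w'v ?orbT.
by rewrite deg1 cards2 ww'.
Qed.

Lemma Ltree_degree_last v z : irreflexive e ->
  (forall u, u != v -> prec s u v) -> e v z -> Ltree_degree e s v = 1.
Proof.
move=> eirr vlast vz.
have zv : prec s z v by apply: vlast; apply: contraTneq vz => ->; rewrite eirr.
have [w vw] := exists_rightmost_left_nbr vz zv.
rewrite /Ltree_degree -(cards1 w); congr #|pred_of_set _|.
apply/setP => x; rewrite !inE /Ltree_edge; have -> : rightmost_left_nbr e s x v = false.
  apply/negbTE; rewrite /rightmost_left_nbr negb_and; apply/orP; left.
  by case: (eqVneq x v) => [->|/vlast]; rewrite /prec ?ltnn //; lia.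
by rewrite orbF; apply/idP/eqP => [/(rightmost_left_nbr_uniq vw)|->].
Qed.

End LTree.

Section BranchLeaves.
Variables (T : finType) (e : rel T).
Hypotheses (esym : symmetric e) (eirr : irreflexive e) (conn : connected_graph e).

Lemma Lbranch_leaf_simplicial s v :
  peo e s -> Lbranch_leaf e s v -> simplicial e v.
Proof.
move=> hs leaf x y vx vy; have so := hs.1; have ps := (peoP e so).1 hs.
by apply: (ps v (mem_ordering so v)) => //; apply: Lbranch_leaf_nbrs_left.
Qed.

Lemma simplicial_Lbranch_leaf v : chordal e -> 2 <= #|T| -> simplicial e v ->
  exists s, peo e s /\ Lbranch_leaf e s v.
Proof.
move=> ech T2 v_simpl.
have [s' [s'_uniq s'E ps']] := chordal_peo_seq [set~ v] esym eirr ech.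
have vs' : v \notin s' by rewrite s'E !inE eqxx.
set s := rcons s' v.
have so : vertex_ordering s.
  apply: uniq_perm; rewrite ?rcons_uniq ?vs' ?enum_uniq // => x.
  by rewrite mem_rcons inE s'E !inE mem_enum; case: eqVneq.
have ps : peo_seq e s by apply: peo_seq_rcons => // x y _ _; apply: v_simpl.
have [w] : exists w, w \in [set~ v] by apply/set0Pn; rewrite -card_gt0 cardsC1; lia.
rewrite !inE => wv.
have /connectP[[|z p] /= vp wE] := conn v w; first by rewrite wE eqxx in wv.
have vz : e v z by case/andP: vp.
have vlast u : u != v -> prec s u v by move=> uv; rewrite prec_rcons_last // s'E !inE.
exists s; split; first exact/(peoP e so).
split; last by move: (Ltree_degree_last so eirr vlast vz).
move: vs' (s'E w); rewrite /s !inE wv; case: (s') => [|a t] //=.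
by rewrite inE negb_or => /andP[].
Qed.

End BranchLeaves.

Theorem theorem9 (T : finType) (e : rel T) :
  simple_graph e -> connected_graph e -> chordal e -> 2 <= #|T| ->
  forall v : T,
    (exists s : seq T, peo e s /\ Lbranch_leaf e s v) <-> simplicial e v.
Proof.
move=> [esym eirr] conn ech T2 v; split.
  by case=> s [hs leaf]; apply: Lbranch_leaf_simplicial hs leaf.
exact: simplicial_Lbranch_leaf.
Qed.
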